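(* For all formulas $\alpha,\beta$, the following hold in ${\bf Km}$: (i) $\Box \alpha, \Diamond \alpha, \Diamond \neg \beta \vdash_{\bf Km} \Diamond \neg (\alpha \to \beta)$; (ii) $\Diamond \alpha, \Box \neg \beta, \Diamond \neg \beta \vdash_{\bf Km} \Diamond \neg (\alpha \to \beta)$; (iii) $\Box \alpha, \Diamond \alpha, \Box \neg \beta \vdash_{\bf Km} \Box \neg(\alpha \to \beta)$; (iv) $\Diamond \alpha, \Diamond \beta \vdash_{\bf Km} \Diamond(\alpha \to \beta)$; (v) $\Diamond \neg \alpha, \Diamond \beta \vdash_{\bf Km} \Diamond(\alpha \to \beta)$; (vi) $\Diamond \neg \alpha, \Diamond \neg \beta \vdash_{\bf Km} \Diamond(\alpha \to \beta)$.
   Context: Formulas are built from a denumerable set of propositional variables by the unary connectives $\neg$, $\Box$ and the binary connective $\to$; $For$ is the set of all formulas. Abbreviations: $\Diamond\alpha:=\neg\Box\neg\alpha$, $\alpha\vee\beta:=\neg\alpha\to\beta$, $\alpha\wedge\beta:=\neg(\alpha\to\neg\beta)$. ${\bf Km}$ is the Hilbert calculus whose axioms are all instances (over $For$) of the axiom schemas of a standard Hilbert calculus for classical propositional logic in the signature $\{\neg,\to\}$, plus all instances of: (K') $\Diamond\alpha\to(\Box(\alpha\to\beta)\to(\Box\alpha\to\Box\beta))$; (K1') $\Diamond\neg\beta\to(\Box(\alpha\to\beta)\to(\Diamond\alpha\to\Diamond\beta))$; (K2') $\Diamond\alpha\to(\Diamond(\alpha\to\beta)\to(\Box\alpha\to\Diamond\beta))$;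 (M3') $(\Diamond\alpha\vee\Diamond\neg\alpha)\to(\Diamond\beta\to\Diamond(\alpha\to\beta))$; (M4') $\Diamond\neg\beta\to(\Diamond\neg\alpha\to\Diamond(\alpha\to\beta))$; (I1) $(\Box\alpha\wedge\Box\neg\alpha)\to(\Box(\alpha\to\beta)\wedge\Box\neg(\alpha\to\beta))$; (I2) $(\Box\beta\wedge\Box\neg\beta)\to(\Box(\alpha\to\beta)\wedge\Box\neg(\alpha\to\beta))$; (M1) $\neg\Diamond\alpha\to\Box(\alpha\to\beta)$; (M2) $\Box\beta\to\Box(\alpha\to\beta)$; (DN1) $\Box\alpha\to\Box\neg\neg\alpha$; (DN2) $\Box\neg\neg\alpha\to\Box\alpha$. Modus ponens is the only rule; $\Gamma\vdash_{\bf Km}\alpha$ means there is a derivation of $\alpha$ from $\Gamma$. *)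

From Stdlib Require Import List.
Import ListNotations.

Inductive For : Type :=
| Var : nat -> For
| Neg : For -> For
| Box : For -> For
| Imp : For -> For -> For.

Definition Dia (a : For) : For := Neg (Box (Neg a)).
Definition Or (a b : For) : For := Imp (Neg a) b.
Definition And (a b : For) : For := Neg (Imp a (Neg b)).

(* Axioms of Km: a standard Hilbert calculus for CPL in {neg, ->}
   (Lukasiewicz/Mendelson-style A1-A3) plus the modal schemas. *)
Inductive KmAxiom : For -> Prop :=
| Ax1 a b : KmAxiom (Imp a (Imp b a))
| Ax2 a b c : KmAxiom (Imp (Imp a (Imp b c)) (Imp (Imp a b) (Imp a c)))
| Ax3 a b : KmAxiom (Imp (Imp (Neg a) (Neg b)) (Imp b a))
| AxK' a b : KmAxiom (Imp (Dia a) (Imp (Box (Imp a b)) (Imp (Box a) (Box b))))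
| AxK1' a b : KmAxiom (Imp (Dia (Neg b)) (Imp (Box (Imp a b)) (Imp (Dia a) (Dia b))))
| AxK2' a b : KmAxiom (Imp (Dia a) (Imp (Dia (Imp a b)) (Imp (Box a) (Dia b))))
| AxM3' a b : KmAxiom (Imp (Or (Dia a) (Dia (Neg a))) (Imp (Dia b) (Dia (Imp a b))))
| AxM4' a b : KmAxiom (Imp (Dia (Neg b)) (Imp (Dia (Neg a)) (Dia (Imp a b))))
| AxI1 a b : KmAxiom (Imp (And (Box a) (Box (Neg a)))
                          (And (Box (Imp a b)) (Box (Neg (Imp a b)))))
| AxI2 a b : KmAxiom (Imp (And (Box b) (Box (Neg b)))
                          (And (Box (Imp a b)) (Box (Neg (Imp a b)))))
| AxM1 a b : KmAxiom (Imp (Neg (Dia a)) (Box (Imp a b)))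
| AxM2 a b : KmAxiom (Imp (Box b) (Box (Imp a b)))
| AxDN1 a : KmAxiom (Imp (Box a) (Box (Neg (Neg a))))
| AxDN2 a : KmAxiom (Imp (Box (Neg (Neg a))) (Box a)).

Inductive Km_derives (Gamma : For -> Prop) : For -> Prop :=
| D_hyp a : Gamma a -> Km_derives Gamma a
| D_ax a : KmAxiom a -> Km_derives Gamma a
| D_mp a b : Km_derives Gamma (Imp a b) -> Km_derives Gamma a -> Km_derives Gamma b.

Definition premises (l : list For) : For -> Prop := fun a => In a l.

(* Each item is one modal axiom of Km applied by modus ponens.  Items (iv)-(vi)
   are instances of M3' and M4'; items (i)-(iii) argue by contradiction:
   assuming the negated conclusion, K', K1' or K2' (with DN1/DN2 to move
   double negations under the box) yields a formula whose negation is a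
   premise. *)

From Stdlib Require Import List.
Import ListNotations.

Definition add_premise (G : For -> Prop) (a : For) : For -> Prop :=
  fun x => x = a \/ G x.

Lemma Km_weaken (G D : For -> Prop) f :
  (forall x, G x -> D x) -> Km_derives G f -> Km_derives D f.
Proof.
  intros GD d; induction d.
  - apply D_hyp; auto.
  - apply D_ax; auto.
  - eapply D_mp; eauto.
Qed.

Lemma Km_lift G a f : Km_derives G f -> Km_derives (add_premise G a) f.
Proof. apply Km_weaken; intros; right; assumption. Qed.

Lemma Km_assumption G a : Km_derives (add_premise G a) a.
Proof. apply D_hyp; left; reflexivity. Qed.

Lemma Km_mp2 G a b c :
  Km_derives G (Imp a (Imp b c)) -> Km_derives G a -> Km_derives G b ->
  Km_derives G c.
Proof. intros dabc da db; eapply D_mp; [eapply D_mp|]; eassumption. Qed.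

Lemma Km_mp3 G a b c d :
  Km_derives G (Imp a (Imp b (Imp c d))) ->
  Km_derives G a -> Km_derives G b -> Km_derives G c -> Km_derives G d.
Proof. intros dabcd da db dc; eapply D_mp; [eapply Km_mp2|]; eassumption. Qed.

Lemma Km_imp_refl G a : Km_derives G (Imp a a).
Proof.
  eapply Km_mp2; [apply D_ax, (Ax2 a (Imp a a) a) | apply D_ax, Ax1 ..].
Qed.

Lemma Km_deduction G a b :
  Km_derives (add_premise G a) b -> Km_derives G (Imp a b).
Proof.
  intro d; induction d as [x [-> | Gx] | x ax | x y _ IHxy _ IHx].
  - apply Km_imp_refl.
  - eapply D_mp; [apply D_ax, Ax1 | apply D_hyp; exact Gx].
  - eapply D_mp; [apply D_ax, Ax1 | apply D_ax; exact ax].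
  - eapply Km_mp2; [apply D_ax, Ax2 | exact IHxy | exact IHx].
Qed.

Lemma Km_neg_imp G x y : Km_derives G (Imp (Neg x) (Imp x y)).
Proof.
  apply Km_deduction, Km_deduction.
  eapply Km_mp2; [apply D_ax, (Ax3 y x) | | apply Km_assumption].
  eapply D_mp; [apply D_ax, Ax1 | apply Km_lift, Km_assumption].
Qed.

Lemma Km_dne G x : Km_derives G (Imp (Neg (Neg x)) x).
Proof.
  apply Km_deduction.
  eapply Km_mp2; [apply D_ax, (Ax3 x (Neg (Neg x))) | | apply Km_assumption].
  eapply D_mp; [apply Km_neg_imp | apply Km_assumption].
Qed.

Lemma Km_reductio G x y :
  Km_derives (add_premise G x) y -> Km_derives (add_premise G x) (Neg y) ->
  Km_derives G (Neg x).
Proof.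
  intros dy dny.
  (* Ax3 turns ~~x -> ~(x -> x) into (x -> x) -> ~x. *)
  assert (dx : Km_derives (add_premise G (Neg (Neg x))) x).
  { eapply D_mp; [apply Km_dne | apply Km_assumption]. }
  assert (absurd : Km_derives G (Imp (Neg (Neg x)) (Neg (Imp x x)))).
  { apply Km_deduction.
    eapply Km_mp2; [apply Km_neg_imp | |].
    - eapply D_mp; [apply Km_lift, Km_deduction, dny | exact dx].
    - eapply D_mp; [apply Km_lift, Km_deduction, dy | exact dx]. }
  eapply Km_mp2; [apply D_ax, (Ax3 (Neg x) (Imp x x)) | exact absurd |].
  apply Km_imp_refl.
Qed.

Lemma Km_or_introl G x y : Km_derives G x -> Km_derives G (Or x y).
Proof.
  intro dx; apply Km_deduction.
  eapply Km_mp2; [apply Km_neg_imp | apply Km_assumption | apply Km_lift, dx].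
Qed.

Lemma Km_or_intror G x y : Km_derives G y -> Km_derives G (Or x y).
Proof. intro dy; eapply D_mp; [apply D_ax, Ax1 | exact dy]. Qed.


Section DerivedRules.

Variables (G : For -> Prop) (a b : For).

Lemma Km_dia_neg_imp_of_box_dia :
  Km_derives G (Box a) -> Km_derives G (Dia a) -> Km_derives G (Dia (Neg b)) ->
  Km_derives G (Dia (Neg (Imp a b))).
Proof.
  intros dBa dDa dDnb.
  apply (Km_reductio _ _ (Box (Neg (Neg b)))); [| apply Km_lift, dDnb].
  eapply D_mp; [apply D_ax, AxDN1 |].
  eapply Km_mp3; [apply D_ax, (AxK' a b) | apply Km_lift, dDa | | apply Km_lift, dBa].
  eapply D_mp; [apply D_ax, AxDN2 | apply Km_assumption].
Qed.

Lemma Km_dia_neg_imp_of_box_neg :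
  Km_derives G (Dia a) -> Km_derives G (Box (Neg b)) -> Km_derives G (Dia (Neg b)) ->
  Km_derives G (Dia (Neg (Imp a b))).
Proof.
  intros dDa dBnb dDnb.
  apply (Km_reductio _ _ (Box (Neg b))); [apply Km_lift, dBnb |].
  eapply Km_mp3; [apply D_ax, (AxK1' a b) | apply Km_lift, dDnb | | apply Km_lift, dDa].
  eapply D_mp; [apply D_ax, AxDN2 | apply Km_assumption].
Qed.

Lemma Km_box_neg_imp :
  Km_derives G (Box a) -> Km_derives G (Dia a) -> Km_derives G (Box (Neg b)) ->
  Km_derives G (Box (Neg (Imp a b))).
Proof.
  intros dBa dDa dBnb.
  eapply D_mp; [apply Km_dne |].
  apply (Km_reductio _ _ (Box (Neg b))); [apply Km_lift, dBnb |].
  eapply Km_mp3; [apply D_ax, (AxK2' a b) | apply Km_lift, dDa | apply Km_assumption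
                 | apply Km_lift, dBa].
Qed.

Lemma Km_dia_imp_of_dia :
  Km_derives G (Dia a) -> Km_derives G (Dia b) -> Km_derives G (Dia (Imp a b)).
Proof.
  intros dDa dDb.
  eapply Km_mp2; [apply D_ax, AxM3' | apply Km_or_introl, dDa | exact dDb].
Qed.

Lemma Km_dia_imp_of_dia_neg_dia :
  Km_derives G (Dia (Neg a)) -> Km_derives G (Dia b) -> Km_derives G (Dia (Imp a b)).
Proof.
  intros dDna dDb.
  eapply Km_mp2; [apply D_ax, AxM3' | apply Km_or_intror, dDna | exact dDb].
Qed.

Lemma Km_dia_imp_of_dia_neg :
  Km_derives G (Dia (Neg a)) -> Km_derives G (Dia (Neg b)) ->
  Km_derives G (Dia (Imp a b)).
Proof. intros dDna dDnb; eapply Km_mp2; [apply D_ax, AxM4' | exact dDnb | exact dDna]. Qed.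

End DerivedRules.

Theorem mainTheorem19 : forall a b : For,
  Km_derives (premises [Box a; Dia a; Dia (Neg b)]) (Dia (Neg (Imp a b))) /\
  Km_derives (premises [Dia a; Box (Neg b); Dia (Neg b)]) (Dia (Neg (Imp a b))) /\
  Km_derives (premises [Box a; Dia a; Box (Neg b)]) (Box (Neg (Imp a b))) /\
  Km_derives (premises [Dia a; Dia b]) (Dia (Imp a b)) /\
  Km_derives (premises [Dia (Neg a); Dia b]) (Dia (Imp a b)) /\
  Km_derives (premises [Dia (Neg a); Dia (Neg b)]) (Dia (Imp a b)).
Proof.
  intros a b; repeat split;
    [ apply Km_dia_neg_imp_of_box_dia | apply Km_dia_neg_imp_of_box_neg
    | apply Km_box_neg_imp | apply Km_dia_imp_of_dia
    | apply Km_dia_imp_of_dia_neg_dia | apply Km_dia_imp_of_dia_neg ];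
    apply D_hyp; simpl; tauto.
Qed.
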